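(* Let $\mathbb{C}$ be a regular category. If $\mathbb{C}$ has finite 2-fold subobject decompositions, then $\mathbb{C}$ is a majority category.
   Context: A category is regular if it has finite limits and coequalizers of kernel pairs and regular epimorphisms are pullback-stable; the image of a subobject $S$ (represented by $s$) under a morphism $f$ is the subobject represented by the mono part of a regular epi–mono factorization of $fs$. $\mathbb{C}$ has finite 2-fold subobject decompositions if for every positive integer $n$, all objects $A_1,\dots,A_n$ and all subobjects $S,T$ of $A_1\times\cdots\times A_n$: if for all $i,j\in\{1,\dots,n\}$ the images of $S$ and $T$ under $(\pi_i,\pi_j):A_1\times\cdots\times A_n\to A_i\times A_j$ coincide, then $S=T$. For $w:S\to W$ and subobject $A$ of $W$, $w\in_S A$ means $w$ factors through a representative of $A$. A ternary relation $R\leqslant X\times Y\times Z$ is majority-selecting if for all $S$ and $x,x':S\to X$, $y,y':S\to Y$, $z,z':S\to Z$: $(x,y,z')\in_S R$, $(x,y',z)\in_S R$, $(x',y,z)\in_S R$ imply $(x,y,z)\in_S R$; $\mathbb{C}$ is a majority category if every ternary relation in it is majority-selecting. *)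

From mathcomp Require Import all_boot.
Unset Implicit Arguments.
Unset Strict Implicit.
Unset Printing Implicit Defensive.

Record Cat := {
  Ob :> Type;
  Hom : Ob -> Ob -> Type;
  idm : forall A, Hom A A;
  comp : forall A B C, Hom B C -> Hom A B -> Hom A C;
  comp_assoc : forall A B C D (h : Hom C D) (g : Hom B C) (f : Hom A B),
      comp _ _ _ h (comp _ _ _ g f) = comp _ _ _ (comp _ _ _ h g) f;
  comp_id_l : forall A B (f : Hom A B), comp _ _ _ (idm B) f = f;
  comp_id_r : forall A B (f : Hom A B), comp _ _ _ f (idm A) = f
}.
Arguments Hom {c} _ _.
Arguments idm {c} _.
Arguments comp {c A B C} _ _.

Section Defs.
Variable C : Cat.

Definition mono {A B : C} (m : Hom A B) : Prop :=
  forall X (g h : Hom X A), comp m g = comp m h -> g = h.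

Definition is_terminal (T : C) : Prop :=
  forall X : C, exists h : Hom X T, forall h' : Hom X T, h' = h.

Record BinProd (A B : C) := {
  bp_ob : C;
  bp_p1 : Hom bp_ob A;
  bp_p2 : Hom bp_ob B;
  bp_pair : forall X, Hom X A -> Hom X B -> Hom X bp_ob;
  bp_beta1 : forall X f g, comp bp_p1 (bp_pair X f g) = f;
  bp_beta2 : forall X f g, comp bp_p2 (bp_pair X f g) = g;
  bp_uniq : forall X f g (h : Hom X bp_ob),
      comp bp_p1 h = f -> comp bp_p2 h = g -> h = bp_pair X f g
}.

Arguments bp_ob {A B} _.
Arguments bp_p1 {A B} _.
Arguments bp_p2 {A B} _.
Arguments bp_pair {A B} _ _ _ _.

Definition is_equalizer {A B E : C} (f g : Hom A B) (e : Hom E A) : Prop :=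
  comp f e = comp g e /\
  forall X (h : Hom X A), comp f h = comp g h ->
    exists k : Hom X E, comp e k = h /\ forall k', comp e k' = h -> k' = k.

Definition has_finite_limits : Prop :=
  (exists T : C, is_terminal T) /\
  (forall A B : C, inhabited (BinProd A B)) /\
  (forall (A B : C) (f g : Hom A B), exists (E : C) (e : Hom E A), is_equalizer f g e).

Definition is_pullback {A B D P : C} (f : Hom A D) (g : Hom B D)
  (p : Hom P A) (q : Hom P B) : Prop :=
  comp f p = comp g q /\
  forall X (x : Hom X A) (y : Hom X B), comp f x = comp g y ->
    exists k : Hom X P, (comp p k = x /\ comp q k = y) /\
      forall k', comp p k' = x -> comp q k' = y -> k' = k.

Definition is_kernel_pair {A B K : C} (f : Hom A B) (p1 p2 : Hom K A) : Prop :=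
  is_pullback f f p1 p2.

Definition is_coequalizer {A B Q : C} (f g : Hom A B) (c : Hom B Q) : Prop :=
  comp c f = comp c g /\
  forall X (h : Hom B X), comp h f = comp h g ->
    exists k : Hom Q X, comp k c = h /\ forall k', comp k' c = h -> k' = k.

Definition regular_epi {B Q : C} (e : Hom B Q) : Prop :=
  exists (A : C) (f g : Hom A B), is_coequalizer f g e.

Definition is_regular : Prop :=
  has_finite_limits /\
  (forall (A B K : C) (f : Hom A B) (p1 p2 : Hom K A),
      is_kernel_pair f p1 p2 -> exists (Q : C) (c : Hom A Q), is_coequalizer p1 p2 c) /\
  (forall (A B D P : C) (e : Hom A D) (g : Hom B D) (p : Hom P A) (q : Hom P B),
      regular_epi e -> is_pullback e g p q -> regular_epi q).

Definition same_sub {A S T : C} (s : Hom S A) (t : Hom T A) : Prop :=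
  (exists h : Hom S T, comp t h = s) /\ (exists k : Hom T S, comp s k = t).

Definition image_rep {S A B I : C} (f : Hom A B) (s : Hom S A) (m : Hom I B) : Prop :=
  mono m /\ exists e : Hom S I, regular_epi e /\ comp f s = comp m e.

Definition same_image {S T A B : C} (f : Hom A B) (s : Hom S A) (t : Hom T A) : Prop :=
  exists (I J : C) (m : Hom I B) (n : Hom J B),
    image_rep f s m /\ image_rep f t n /\ same_sub m n.

Record ProdCone (n : nat) (A : 'I_n -> C) := {
  pc_ob : C;
  pc_proj : forall i, Hom pc_ob (A i);
  pc_tuple : forall X, (forall i, Hom X (A i)) -> Hom X pc_ob;
  pc_beta : forall X f i, comp (pc_proj i) (pc_tuple X f) = f i;
  pc_uniq : forall X f (h : Hom X pc_ob),
      (forall i, comp (pc_proj i) h = f i) -> h = pc_tuple X f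
}.

Arguments pc_ob {n A} _.
Arguments pc_proj {n A} _ _.
Arguments pc_tuple {n A} _ _ _.

Definition finite_2fold_subobject_decompositions : Prop :=
  forall (n : nat), 0 < n ->
  forall (A : 'I_n -> C) (P : ProdCone n A) (S T : C)
         (s : Hom S (pc_ob P)) (t : Hom T (pc_ob P)),
    mono s -> mono t ->
    (forall (i j : 'I_n) (Q : BinProd (A i) (A j)),
        same_image (bp_pair Q _ (pc_proj P i) (pc_proj P j)) s t) ->
    same_sub s t.

Record TerProd (X Y Z : C) := {
  tp_ob : C;
  tp_p1 : Hom tp_ob X;
  tp_p2 : Hom tp_ob Y;
  tp_p3 : Hom tp_ob Z;
  tp_tuple : forall S, Hom S X -> Hom S Y -> Hom S Z -> Hom S tp_ob;
  tp_beta1 : forall S x y z, comp tp_p1 (tp_tuple S x y z) = x;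
  tp_beta2 : forall S x y z, comp tp_p2 (tp_tuple S x y z) = y;
  tp_beta3 : forall S x y z, comp tp_p3 (tp_tuple S x y z) = z;
  tp_uniq : forall S x y z (h : Hom S tp_ob),
      comp tp_p1 h = x -> comp tp_p2 h = y -> comp tp_p3 h = z -> h = tp_tuple S x y z
}.

Arguments tp_ob {X Y Z} _.
Arguments tp_tuple {X Y Z} _ _ _ _ _.

Definition gen_mem {S W R : C} (w : Hom S W) (a : Hom R W) : Prop :=
  exists h : Hom S R, comp a h = w.

Definition majority_selecting {X Y Z R : C} (P : TerProd X Y Z) (r : Hom R (tp_ob P)) : Prop :=
  forall (S : C) (x x' : Hom S X) (y y' : Hom S Y) (z z' : Hom S Z),
    gen_mem (tp_tuple P S x y z') r ->
    gen_mem (tp_tuple P S x y' z) r ->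
    gen_mem (tp_tuple P S x' y z) r ->
    gen_mem (tp_tuple P S x y z) r.

Definition majority_category : Prop :=
  forall (X Y Z : C) (P : TerProd X Y Z) (R : C) (r : Hom R (tp_ob P)),
    mono r -> majority_selecting P r.

End Defs.

(* Let R be a relation on X x Y x Z and let R' consist of the triples each of
   whose three binary projections lies in the corresponding binary image of R.
   In a regular category R' is a subobject, namely an intersection of pullbacks
   of images, and it contains R and has the same binary images as R; finite
   2-fold subobject decompositions therefore force R' = R.  If (x,y,z'),
   (x,y',z) and (x',y,z) lie in R, then every pair of coordinates of (x,y,z)
   agrees with that of one of them, so (x,y,z) lies in R' = R.  Membership is
   always membership of generalised elements. *)

From mathcomp Require Import all_boot.

Section Regular.
Context {C : Cat}.

Definition epi {B Q : C} (e : Hom B Q) : Prop :=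
  forall X (u v : Hom Q X), comp u e = comp v e -> u = v.

Lemma epi_comp {A B D : C} (f : Hom B D) (g : Hom A B) :
  epi f -> epi g -> epi (comp f g).
Proof. by move=> Hf Hg X u v; rewrite !comp_assoc => /Hg /Hf. Qed.

Lemma mono_comp {A B D : C} (f : Hom B D) (g : Hom A B) :
  mono C f -> mono C g -> mono C (comp f g).
Proof. by move=> Hf Hg X a b; rewrite -!comp_assoc => /Hf /Hg. Qed.

Lemma regular_epi_epi {B Q : C} {e : Hom B Q} : regular_epi C e -> epi e.
Proof.
move=> [A [f [g [Hfg Hcoeq]]]] X u v Huv.
have [k [_ Hk]] := Hcoeq X (comp u e) ltac:(by rewrite -!comp_assoc Hfg).
by rewrite (Hk u erefl) (Hk v (esym Huv)).
Qed.

Lemma regular_epi_mono_diag {S I J B : C} {e : Hom S I} {m : Hom J B}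
    {u : Hom I B} {v : Hom S J} :
  regular_epi C e -> mono C m -> comp u e = comp m v ->
  exists d, comp m d = u /\ comp d e = v.
Proof.
move=> He Hm Huv; have e_epi := regular_epi_epi He.
case: He => [A [f [g [Hfg Hcoeq]]]].
have [d [Hd _]] : exists d, _ := Hcoeq J v
  ltac:(by apply: Hm; rewrite !comp_assoc -Huv -!comp_assoc Hfg).
exists d; split => //.
by apply: e_epi; rewrite -comp_assoc Hd.
Qed.

Lemma gen_mem_refl {U V : C} (q : Hom U V) : gen_mem C q q.
Proof. by exists (idm U); rewrite comp_id_r. Qed.

Lemma gen_mem_comp {W W' U V : C} (t : Hom W V) (u : Hom W' W) (q : Hom U V) :
  gen_mem C t q -> gen_mem C (comp t u) q.
Proof. by case=> k <-; exists (comp k u); rewrite comp_assoc. Qed.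

Lemma gen_mem_trans {W U U' V : C} (t : Hom W V) (q : Hom U V) (q' : Hom U' V) :
  gen_mem C t q -> gen_mem C q q' -> gen_mem C t q'.
Proof. by case=> k <- Hq; apply: gen_mem_comp. Qed.

Lemma mono_of_kernel_pair_eq {K I B : C} (m : Hom I B) (u : Hom K I) :
  is_kernel_pair C m u u -> mono C m.
Proof.
move=> [_ Hkp] X a b Hab.
by have [k [[<- <-] _]] := Hkp X a b Hab.
Qed.

Lemma bp_pair_comp {A B W V : C} (Q : BinProd C A B) (a : Hom W A) (b : Hom W B)
    (k : Hom V W) :
  comp (bp_pair C _ _ Q W a b) k = bp_pair C _ _ Q V (comp a k) (comp b k).
Proof. by apply: bp_uniq; rewrite comp_assoc ?bp_beta1 ?bp_beta2. Qed.

Definition represents {U V : C} (q : Hom U V) (Pr : forall W : C, Hom W V -> Prop) :=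
  mono C q /\ forall W (t : Hom W V), gen_mem C t q <-> Pr W t.

Section FiniteLimits.
Hypothesis HL : has_finite_limits C.

Lemma pullback_exists (A B D : C) (f : Hom A D) (g : Hom B D) :
  exists P (p : Hom P A) (q : Hom P B), is_pullback C f g p q.
Proof.
have [_ [Hprod Heq]] := HL.
case: (Hprod A B) => Q.
have [E [e [He Heq_univ]]] := Heq _ _ (comp f (bp_p1 C _ _ Q)) (comp g (bp_p2 C _ _ Q)).
exists E, (comp (bp_p1 C _ _ Q) e), (comp (bp_p2 C _ _ Q) e); split.
  by rewrite !comp_assoc.
move=> X x y Hxy.
have [k [Hk Huniq]] := Heq_univ X (bp_pair C _ _ Q X x y)
  ltac:(by rewrite -!comp_assoc bp_beta1 bp_beta2).
exists k; split.
  by rewrite -!comp_assoc Hk bp_beta1 bp_beta2.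
by move=> k' H1 H2; apply: Huniq; apply: bp_uniq; rewrite comp_assoc.
Qed.

Lemma represents_preimage {V J B : C} (h : Hom V B) (n : Hom J B) : mono C n ->
  exists U (q : Hom U V), represents q (fun W t => gen_mem C (comp h t) n).
Proof.
move=> Hn.
have [P [p [p' [Hpp Hpb]]]] := pullback_exists _ _ _ h n.
exists P, p; split.
  move=> X a b Hab.
  have Hb : comp p' a = comp p' b.
    by apply: Hn; rewrite !comp_assoc -Hpp -!comp_assoc Hab.
  have [k [_ Hk]] := Hpb X (comp p a) (comp p' a) ltac:(by rewrite !comp_assoc Hpp).
  by rewrite (Hk a erefl erefl) (Hk b (esym Hab) (esym Hb)).
move=> W t; split.
  by case=> k <-; exists (comp p' k); rewrite !comp_assoc Hpp.
by case=> k Hk; have [t' [[Ht' _] _]] := Hpb W t k (esym Hk); exists t'.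
Qed.

Lemma represents_meet {U U' V : C} {q : Hom U V} {q' : Hom U' V} {Pr Pr'} :
  represents q Pr -> represents q' Pr' ->
  exists U'' (q'' : Hom U'' V), represents q'' (fun W t => Pr W t /\ Pr' W t).
Proof.
move=> [Hq HPr] [Hq' HPr'].
have [U2 [q2 [Hq2 Hpre]]] := represents_preimage q q' Hq'.
exists U2, (comp q q2); split; first exact: mono_comp.
move=> W t; split.
  case=> k <-; rewrite -comp_assoc; split; first by apply/HPr; exists (comp q2 k).
  by apply/HPr'/Hpre; exists k.
case=> /HPr [s <-] /HPr' /Hpre [k <-].
by exists k; rewrite comp_assoc.
Qed.

Lemma represents_all {I : finType} {V : C} {Pr : I -> forall W : C, Hom W V -> Prop} :
  (forall i, exists U (q : Hom U V), represents q (Pr i)) ->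
  exists U (q : Hom U V), represents q (fun W t => forall i, Pr i W t).
Proof.
move=> HPr.
suff [U [q [Hq HqPr]]] : exists U (q : Hom U V),
    represents q (fun W t => forall i, i \in enum I -> Pr i W t).
  exists U, q; split=> // W t; split=> [/HqPr H i | H]; last exact/HqPr.
  by apply: H; rewrite mem_enum.
elim: (enum I) => [|i s [U [q Hq]]].
  exists V, (idm V); split; first by move=> X a b; rewrite !comp_id_l.
  by move=> W t; split=> // _; exists t; rewrite comp_id_l.
have [Ui [qi Hqi]] := HPr i.
have [U' [q' [Hq' HPr']]] := represents_meet Hqi Hq.
exists U', q'; split=> // W t; split.
  by move=> /HPr' [Hi Hs] j; rewrite in_cons => /orP [/eqP -> //|]; apply: Hs.
by move=> H; apply/HPr'; split=> [|j Hj]; apply: H; rewrite in_cons ?eqxx ?Hj ?orbT.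
Qed.

End FiniteLimits.

Section RegularCategory.
Hypothesis HC : is_regular C.

(* Pulling [e] back along [u] and then along [v] covers the pair [(u, v)]. *)
Lemma regular_epi_cover_pair {A I K : C} (e : Hom A I) (u v : Hom K I) :
  regular_epi C e -> exists M (c : Hom M K) (a b : Hom M A),
    epi c /\ comp e a = comp u c /\ comp e b = comp v c.
Proof.
case: HC => [HL [_ Hstable]] He.
have [L [l1 [l2 HL1]]] := pullback_exists HL _ _ _ e u.
have [M [m1 [m2 HM]]] := pullback_exists HL _ _ _ e (comp v l2).
exists M, (comp l2 m2), (comp l1 m2), m1; split; [|split].
- by apply: epi_comp; apply: regular_epi_epi; [exact: Hstable He HL1 | exact: Hstable He HM].
- by rewrite comp_assoc (proj1 HL1) comp_assoc.
- by rewrite (proj1 HM) comp_assoc.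
Qed.

Lemma regular_factorization {A B : C} (h : Hom A B) :
  exists I (m : Hom I B) (e : Hom A I), mono C m /\ regular_epi C e /\ comp m e = h.
Proof.
have [HL [Hcoeq _]] := HC.
have [K [p1 [p2 Hkp]]] := pullback_exists HL _ _ _ h h.
have [I [e [He_coeq He_univ]]] := Hcoeq _ _ _ h p1 p2 Hkp.
have [m [Hme _]] := He_univ B h (proj1 Hkp).
have He : regular_epi C e by exists K, p1, p2.
exists I, m, e; split => //.
have [Km [u [v Hkm]]] := pullback_exists HL _ _ _ m m.
(* The kernel pair of [m] is covered by that of [h], which [e] coequalises. *)
suff Euv : u = v by rewrite Euv in Hkm; apply: mono_of_kernel_pair_eq Hkm.
have [M [c [a [b [Hc [Ha Hb]]]]]] := regular_epi_cover_pair e u v He.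
have [g [[Hg1 Hg2] _]] : exists g, _ := proj2 Hkp M a b
  ltac:(by rewrite -Hme -!comp_assoc Ha Hb !comp_assoc (proj1 Hkm)).
by apply: Hc; rewrite -Ha -Hb -Hg1 -Hg2 !comp_assoc He_coeq.
Qed.

Lemma image_rep_exists {S A B : C} (f : Hom A B) (s : Hom S A) :
  exists I (m : Hom I B), image_rep C f s m.
Proof.
have [I [m [e [Hm [He Hme]]]]] := regular_factorization (comp f s).
by exists I, m; split=> //; exists e.
Qed.

Lemma image_rep_least {S A B I J : C} {f : Hom A B} {s : Hom S A} {m : Hom I B}
    (n : Hom J B) :
  image_rep C f s m -> mono C n -> gen_mem C (comp f s) n -> gen_mem C m n.
Proof.
move=> [_ [e [He Hfs]]] Hn [k Hk].
have [d [Hd _]] := regular_epi_mono_diag He Hn (esym (etrans Hk Hfs)).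
by exists d.
Qed.

Definition in_image {S A B W : C} (f : Hom A B) (s : Hom S A) (t : Hom W A) : Prop :=
  forall I (m : Hom I B), image_rep C f s m -> gen_mem C (comp f t) m.

Lemma in_image_of_gen_mem {S A B W : C} (f : Hom A B) (s : Hom S A) (t : Hom W A) :
  gen_mem C t s -> in_image f s t.
Proof.
case=> k <- I m [_ [e [_ Hfs]]].
by exists (comp e k); rewrite !comp_assoc Hfs.
Qed.

Lemma in_image_postcomp {S A B B' W : C} (phi : Hom B B') (g : Hom A B)
    (s : Hom S A) (t : Hom W A) :
  in_image g s t -> in_image (comp phi g) s t.
Proof.
move=> Ht I m [Hm [e [He Hfs]]].
have [J [n Hn]] := image_rep_exists g s.
have [k Hk] := Ht J n Hn.
case: Hn => _ [e' [He' Hgs]].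
have Hsq : comp (comp phi n) e' = comp m e by rewrite -comp_assoc -Hgs comp_assoc.
have [d [Hd _]] := regular_epi_mono_diag He' Hm Hsq.
by exists (comp d k); rewrite comp_assoc Hd -comp_assoc Hk comp_assoc.
Qed.

Lemma represents_in_image {S A B : C} (f : Hom A B) (s : Hom S A) :
  exists U (q : Hom U A), represents q (fun W t => in_image f s t).
Proof.
have [I [m Hm]] := image_rep_exists f s.
have [U [q [Hq Hpre]]] := represents_preimage (proj1 HC) f m (proj1 Hm).
exists U, q; split=> // W t; split.
  move=> /Hpre Ht J n Hn; apply: gen_mem_trans Ht _.
  by apply: image_rep_least Hm (proj1 Hn) _; case: Hn => _ [e [_ ->]]; exists e.
by move=> Ht; apply/Hpre; apply: Ht Hm.
Qed.

Lemma same_image_of_in_image {S T A B : C} (f : Hom A B) (s : Hom S A) (t : Hom T A) :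
  gen_mem C s t -> in_image f s t -> same_image C f s t.
Proof.
move=> Hst Hfts.
have [I [m Hm]] := image_rep_exists f s.
have [J [n Hn]] := image_rep_exists f t.
exists I, J, m, n; split=> //; split=> //; split.
  apply: image_rep_least Hm (proj1 Hn) _.
  by apply: in_image_of_gen_mem Hst J n Hn.
by apply: image_rep_least Hn (proj1 Hm) (Hfts I m Hm).
Qed.

End RegularCategory.
End Regular.

Section PairwiseImages.
Context {C : Cat} {n : nat} {A : 'I_n -> C} (P : ProdCone C n A) {R : C}.
Variable r : Hom R (pc_ob C n A P).
Local Notation pr := (pc_proj C n A P).

Definition pairwise_in_image {W : C} (t : Hom W (pc_ob C n A P)) : Prop :=
  forall i j (Q : BinProd C (A i) (A j)), in_image (bp_pair C _ _ Q _ (pr i) (pr j)) r t.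

Hypothesis HC : is_regular C.

(* Any two pairings of [pr i] and [pr j] differ by a comparison map. *)
Lemma represents_in_image_pairs (i j : 'I_n) : exists U (q : Hom U (pc_ob C n A P)),
  represents q (fun W t =>
    forall Q : BinProd C (A i) (A j), in_image (bp_pair C _ _ Q _ (pr i) (pr j)) r t).
Proof.
case: (proj1 (proj2 (proj1 HC)) (A i) (A j)) => Q0.
have [U [q [Hq Hin]]] := represents_in_image HC (bp_pair C _ _ Q0 _ (pr i) (pr j)) r.
exists U, q; split=> // W t; split=> [/Hin Ht Q | Ht]; last exact/Hin/Ht.
have -> : bp_pair C _ _ Q _ (pr i) (pr j) =
    comp (bp_pair C _ _ Q _ (bp_p1 C _ _ Q0) (bp_p2 C _ _ Q0))
      (bp_pair C _ _ Q0 _ (pr i) (pr j)).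
  by rewrite bp_pair_comp bp_beta1 bp_beta2.
exact: in_image_postcomp.
Qed.

Lemma represents_pairwise_in_image : exists U (q : Hom U (pc_ob C n A P)),
  represents q (fun W t => pairwise_in_image t).
Proof.
have HL := proj1 HC.
have [U [q Hq]] :=
  represents_all HL (fun i => represents_all HL (represents_in_image_pairs i)).
by exists U, q.
Qed.

Lemma gen_mem_of_pairwise_in_image : finite_2fold_subobject_decompositions C ->
  0 < n -> mono C r -> forall W (t : Hom W (pc_ob C n A P)),
  pairwise_in_image t -> gen_mem C t r.
Proof.
move=> H2 n_gt0 Hr W t Ht.
have [U [q [Hq Hqin]]] := represents_pairwise_in_image.
have Hrq : gen_mem C r q.
  by apply/Hqin => i j Q; apply: in_image_of_gen_mem; apply: gen_mem_refl.
have [_ Hqr] : same_sub C r q.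
  apply: H2 => // i j Q; apply: same_image_of_in_image => //.
  by move: (gen_mem_refl q) => /Hqin; apply.
by apply: gen_mem_trans Hqr; apply/Hqin.
Qed.

End PairwiseImages.

Lemma exists_ord3_neq2 (i j : 'I_3) : exists k : 'I_3, (i != k) && (j != k).
Proof.
case: i j => [[|[|[|?]]] ?] [[|[|[|?]]] ?] //;
  first [by exists (@Ordinal 3 0 isT) | by exists (@Ordinal 3 1 isT)
        | by exists (@Ordinal 3 2 isT)].
Qed.

Section TernaryProduct.
Context {C : Cat} {X Y Z : C} (TP : TerProd C X Y Z).
Local Notation P := (tp_ob C X Y Z TP).

Definition ter_factor (k : nat) : C := match k with 0 => X | 1 => Y | _ => Z end.

Definition ter_proj (i : 'I_3) : Hom P (ter_factor i) :=
  match i as i0 return Hom P (ter_factor i0) with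
  | Ordinal m _ => match m as m0 return Hom P (ter_factor m0) with
                   | 0 => tp_p1 C X Y Z TP
                   | 1 => tp_p2 C X Y Z TP
                   | _ => tp_p3 C X Y Z TP
                   end
  end.

Definition ter_tuple (W : C) (f : forall i : 'I_3, Hom W (ter_factor i)) : Hom W P :=
  tp_tuple C X Y Z TP W (f (@Ordinal 3 0 isT)) (f (@Ordinal 3 1 isT)) (f (@Ordinal 3 2 isT)).

Lemma ter_proj_tuple W f i : comp (ter_proj i) (ter_tuple W f) = f i.
Proof.
case: i => [[|[|[|m]]] Hi] //=; rewrite /ter_tuple ?tp_beta1 ?tp_beta2 ?tp_beta3;
  by rewrite (bool_irrelevance Hi isT).
Qed.

Lemma ter_tuple_uniq W f (h : Hom W P) :
  (forall i, comp (ter_proj i) h = f i) -> h = ter_tuple W f.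
Proof.
move=> Hh; apply: tp_uniq; [exact: (Hh (@Ordinal 3 0 isT)) | exact: (Hh (@Ordinal 3 1 isT))
  | exact: (Hh (@Ordinal 3 2 isT))].
Qed.

Definition ter_cone : ProdCone C 3 ter_factor :=
  Build_ProdCone C 3 ter_factor P ter_proj ter_tuple ter_proj_tuple ter_tuple_uniq.

Variables (S : C) (x x' : Hom S X) (y y' : Hom S Y) (z z' : Hom S Z).

Definition ter_replace (k : 'I_3) : Hom S P :=
  match val k with
  | 0 => tp_tuple C X Y Z TP S x' y z
  | 1 => tp_tuple C X Y Z TP S x y' z
  | _ => tp_tuple C X Y Z TP S x y z'
  end.

Lemma ter_proj_replace (k i : 'I_3) : i != k ->
  comp (ter_proj i) (ter_replace k) = comp (ter_proj i) (tp_tuple C X Y Z TP S x y z).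
Proof.
case: k i => [[|[|[|?]]] ?] [[|[|[|?]]] ?] //= _;
  by rewrite /ter_replace /= ?tp_beta1 ?tp_beta2 ?tp_beta3.
Qed.

Lemma pairwise_in_image_majority {R : C} (r : Hom R P) :
  gen_mem C (tp_tuple C X Y Z TP S x y z') r ->
  gen_mem C (tp_tuple C X Y Z TP S x y' z) r ->
  gen_mem C (tp_tuple C X Y Z TP S x' y z) r ->
  pairwise_in_image ter_cone r (tp_tuple C X Y Z TP S x y z).
Proof.
move=> Hz Hy Hx i j Q I m Hm.
have [k /andP [Hik Hjk]] := exists_ord3_neq2 i j.
have Hk : gen_mem C (ter_replace k) r by case: k {Hik Hjk} => [[|[|[|?]]] ?].
have -> : comp (bp_pair C _ _ Q _ (ter_proj i) (ter_proj j)) (tp_tuple C X Y Z TP S x y z)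
    = comp (bp_pair C _ _ Q _ (ter_proj i) (ter_proj j)) (ter_replace k).
  by rewrite !bp_pair_comp (ter_proj_replace _ _ Hik) (ter_proj_replace _ _ Hjk).
exact: in_image_of_gen_mem Hk I m Hm.
Qed.

End TernaryProduct.

Theorem theorem4p5 (C : Cat) :
  is_regular C -> finite_2fold_subobject_decompositions C -> majority_category C.
Proof.
move=> HC H2 X Y Z TP R r Hr S x x' y y' z z' Hz Hy Hx.
apply: (gen_mem_of_pairwise_in_image (ter_cone TP) r HC H2 isT Hr).
exact: pairwise_in_image_majority Hz Hy Hx.
Qed.
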